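(* For a prime $p$ let $S_p$ be the set of words $w\in\{B,R\}^p$ such that for no $r\in\{1,\dots,p-1\}$ and $i\in\{0,\dots,p-1\}$ are $w_i,w_{i+r},w_{i+2r},w_{i+3r}$ (indices mod $p$) all equal. Then $|S_5|=20$, $S_5$ splits into 4 orbits under $D_5$ and 2 orbits under $D_5\times\langle\tau\rangle$; and $|S_{11}|=44$, $S_{11}$ splits into 2 orbits under $D_{11}$ and 1 orbit under $D_{11}\times\langle\tau\rangle$. In particular $\texttt{BBBRR}\in S_5$ and $\texttt{BBBRBBRBRRR}\in S_{11}$.
   Context: The dihedral group $D_p$ acts on $\{B,R\}^p$ (indices mod $p$) via rotations $(\rho_k w)_i=w_{i-k}$ and reflections $(\sigma_k w)_i=w_{k-i}$. The global color swap $\tau$ interchanges $B\leftrightarrow R$ in every position. *)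

From mathcomp Require Import all_boot.
Set Implicit Arguments. Unset Strict Implicit. Unset Printing Implicit Defensive.

Definition color := bool.
Definition B : color := true.
Definition R : color := false.

Definition word (p : nat) := (p.-tuple color)%type.

Definition at_ (p : nat) (w : word p) (k : nat) : color := nth B w (k %% p).

(* rotation rho_k : (rho_k w)_i = w_{i-k} *)
Definition rho (p : nat) (k : nat) (w : word p) : word p :=
  [tuple at_ w (i + (p - k %% p)) | i < p].
(* reflection sigma_k : (sigma_k w)_i = w_{k-i} *)
Definition sigma (p : nat) (k : nat) (w : word p) : word p :=
  [tuple at_ w (k + (p - i)) | i < p].
Definition tau (p : nat) (w : word p) : word p := [tuple negb (tnth w i) | i < p].

Definition S (p : nat) : {set word p} :=
  [set w : word p | [forall r : 'I_p, (0 < r) ==> [forall i : 'I_p,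
     ~~ [&& at_ w i == at_ w (i + r), at_ w (i + r) == at_ w (i + 2 * r)
          & at_ w (i + 2 * r) == at_ w (i + 3 * r)]]]].

Definition Dorbit (p : nat) (w : word p) : {set word p} :=
  [set rho k w | k : 'I_p] :|: [set sigma k w | k : 'I_p].

Definition DTorbit (p : nat) (w : word p) : {set word p} :=
  Dorbit w :|: [set tau x | x in Dorbit w].

(* number of orbits of a set A (assumed invariant) *)
Definition num_Dorbits (p : nat) (A : {set word p}) : nat :=
  #|[set Dorbit w | w in A]|.
Definition num_DTorbits (p : nat) (A : {set word p}) : nat :=
  #|[set DTorbit w | w in A]|.

From mathcomp Require Import all_boot.
Set Implicit Arguments. Unset Strict Implicit. Unset Printing Implicit Defensive.

(* All the sets involved are finite and explicit, so the theorem is a computation.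
   Each finset-level notion is reflected to a list-level one that [vm_compute] can
   evaluate: bounded quantifiers over ['I_p] become [all] over [iota 0 p], the group
   actions become maps over [iota 0 p], and an orbit, as a set of words, is
   represented by its trace on a fixed enumeration of all words.  That trace is a
   canonical form, so counting orbits is counting distinct traces. *)

Section Tuples.

Variables (T : eqType) (s : seq T).
Hypothesis s_full : forall x : T, x \in s.

Fixpoint all_tuples n : seq (n.-tuple T) :=
  if n is n'.+1 then [seq cons_tuple x t | x <- s, t <- all_tuples n'] else [:: [tuple]].

Lemma mem_all_tuples n (t : n.-tuple T) : t \in all_tuples n.
Proof.
elim: n t => [|n IHn] t; first by rewrite tuple0 mem_seq1.
by case/tupleP: t => x t; apply/allpairsP; exists (x, t).
Qed.

End Tuples.

Lemma mktuple_iota (T : Type) n (F : nat -> T) : val [tuple F i | i < n] = map F (iota 0 n).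
Proof. by rewrite /= -val_enum_ord -map_comp. Qed.

Lemma forall_ord_iota n (P : nat -> bool) : [forall i : 'I_n, P i] = all P (iota 0 n).
Proof.
apply/forallP/allP => [Pi i | Pi i]; last by apply: Pi; rewrite mem_iota ltn_ord.
by rewrite mem_iota => /andP[_ lt_in]; apply: (Pi (Ordinal lt_in)).
Qed.

Lemma mem_imset_ord (U : finType) m n (f : nat -> m.-tuple U) (z : m.-tuple U) :
  (z \in [set f k | k : 'I_n]) = (val z \in [seq val (f k) | k <- iota 0 n]).
Proof.
apply/imsetP/mapP => [[k _ ->]|[k]]; first by exists (val k); rewrite // mem_iota ltn_ord.
by rewrite mem_iota => /andP[_ lt_kn] /val_inj ->; exists (Ordinal lt_kn).
Qed.

Lemma undup_map_in_inj (T U : eqType) (f : T -> U) (s : seq T) :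
  {in s &, injective f} -> undup (map f s) = map f (undup s).
Proof.
elim: s => //= x s IHs inj_f.
have inj_s : {in s &, injective f}.
  by move=> y z ys zs; apply: inj_f; rewrite inE ?ys ?zs orbT.
have -> : (f x \in map f s) = (x \in s).
  apply/mapP/idP => [[y ys fxy] | xs]; last by exists x.
  by rewrite (inj_f x y) // !inE ?eqxx ?ys ?orbT.
by case: ifP; rewrite IHs.
Qed.

Lemma card_seq_undup (T : finType) (s : seq T) (A : {pred T}) :
  s =i A -> #|A| = size (undup s).
Proof. by move=> sA; rewrite -(eq_card sA) -(eq_card (mem_undup s)); apply/card_uniqP/undup_uniq. Qed.

Lemma card_imset_seq (T U : finType) (f : T -> U) (A : {set T}) (s : seq T) :
  s =i A -> #|f @: A| = size (undup (map f s)).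
Proof.
move=> sA; apply: card_seq_undup => y.
by apply/mapP/imsetP => -[x]; rewrite ?sA; exists x; rewrite ?sA.
Qed.

Lemma card_imset_filter (T U : finType) (F : T -> {set U}) (P : T -> pred U)
    (u : seq U) (A : {set T}) (s : seq T) :
  (forall z, z \in u) -> (forall x z, (z \in F x) = P x z) -> s =i A ->
  #|F @: A| = size (undup [seq filter (P x) u | x <- s]).
Proof.
move=> u_full FP sA; rewrite (card_imset_seq _ sA).
pose G x := filter (P x) u.
have FG x : F x = [set z in G x].
  by apply/setP => z; rewrite inE mem_filter u_full andbT FP.
have GK x : [seq z <- u | z \in [set z in G x]] = G x.
  by apply: eq_filter => z; rewrite inE mem_filter u_full andbT.
rewrite (eq_map FG) (map_comp (fun t => [set z in t]) G) undup_map_in_inj ?size_map //.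
by move=> _ _ /mapP[x _ ->] /mapP[y _ ->] eq_xy; rewrite -[G x]GK eq_xy GK.
Qed.

Section Dihedral.

Variable p : nat.
Implicit Types w z : word p.

Definition rotations w : seq (seq color) :=
  [seq [seq at_ w (i + (p - k %% p)) | i <- iota 0 p] | k <- iota 0 p].
Definition reflections w : seq (seq color) :=
  [seq [seq at_ w (k + (p - i)) | i <- iota 0 p] | k <- iota 0 p].

Definition Dimages w := rotations w ++ reflections w.
Definition DTimages w := Dimages w ++ map (map negb) (Dimages w).

Lemma mem_Dorbit w z : (z \in Dorbit w) = (val z \in Dimages w).
Proof.
rewrite !inE (mem_imset_ord _ (fun k => rho k w)) (mem_imset_ord _ (fun k => sigma k w)).
by rewrite mem_cat; congr (_ || _); congr (_ \in _); apply: eq_map => k; apply: mktuple_iota.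
Qed.

Lemma tauE w : tau w = map_tuple negb w.
Proof. by apply: eq_from_tnth => i; rewrite tnth_mktuple tnth_map. Qed.

Lemma tauK : involutive (@tau p).
Proof. by move=> w; apply: val_inj; rewrite !tauE /= (mapK negbK). Qed.

Lemma mem_DTorbit w z : (z \in DTorbit w) = (val z \in DTimages w).
Proof.
rewrite in_setU mem_Dorbit (can2_imset_pre _ tauK tauK) inE mem_Dorbit tauE.
rewrite [in RHS]mem_cat; congr (_ || _).
by rewrite -[val z in RHS](mapK negbK) mem_map //; apply/inj_map/(can_inj negbK).
Qed.

Definition mono_ap4 w (i r : nat) :=
  [&& at_ w i == at_ w (i + r), at_ w (i + r) == at_ w (i + 2 * r)
    & at_ w (i + 2 * r) == at_ w (i + 3 * r)].

Definition ap4_free w :=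
  all (fun r => (0 < r) ==> all (fun i => ~~ mono_ap4 w i r) (iota 0 p)) (iota 0 p).

Lemma in_S w : (w \in S p) = ap4_free w.
Proof.
rewrite inE (forall_ord_iota _ (fun r => (0 < r) ==> [forall i : 'I_p, ~~ mono_ap4 w i r])).
by apply: eq_all => r; rewrite (forall_ord_iota _ (fun i => ~~ mono_ap4 w i r)).
Qed.

Definition words := all_tuples [:: B; R] p.

Lemma mem_words w : w \in words.
Proof. by apply: mem_all_tuples; case. Qed.

Definition S_seq := [seq w <- words | ap4_free w].

Lemma mem_S_seq : S_seq =i S p.
Proof. by move=> w; rewrite mem_filter mem_words andbT in_S. Qed.

Lemma card_S : #|S p| = size (undup S_seq).
Proof. exact: card_seq_undup mem_S_seq. Qed.

Lemma num_Dorbits_S :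
  num_Dorbits (S p) = size (undup [seq filter (preim val (mem (Dimages w))) words | w <- S_seq]).
Proof. exact: card_imset_filter mem_words mem_Dorbit mem_S_seq. Qed.

Lemma num_DTorbits_S :
  num_DTorbits (S p) = size (undup [seq filter (preim val (mem (DTimages w))) words | w <- S_seq]).
Proof. exact: card_imset_filter mem_words mem_DTorbit mem_S_seq. Qed.

End Dihedral.

Theorem mainTheorem11 :
  (#|S 5| = 20 /\ num_Dorbits (S 5) = 4 /\ num_DTorbits (S 5) = 2) /\
  (#|S 11| = 44 /\ num_Dorbits (S 11) = 2 /\ num_DTorbits (S 11) = 1) /\
  ([tuple B; B; B; R; R] : word 5) \in S 5 /\
  ([tuple B; B; B; R; B; B; R; B; R; R; R] : word 11) \in S 11.
Proof.
rewrite !card_S !num_Dorbits_S !num_DTorbits_S !in_S.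
(* [split] would close the equations by (very slow) lazy conversion. *)
by repeat apply: conj; vm_compute.
Qed.
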